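(* For every integer $n\ge2$ there is a complete weighted graph $G=(V,w)$ on $n$ vertices with $\mathrm{cdim}(G)=2n-3$ and minimum cut weight $1$, such that for every $v\in V$ the star cut $\Delta(\{v\})$ is a minimum cut.
   Context: A complete weighted graph $G=(V,w)$ assigns a positive weight to every unordered pair of distinct vertices. For $\emptyset\ne X\subsetneq V$, $\Delta(X)$ is the set of edges with exactly one endpoint in $X$, of weight equal to the sum of their weights. $\mathcal{M}(G)$ is the set of minimum-weight cuts; $\chi(S)$ is the characteristic vector of $S$ indexed by the edges; $\mathrm{cdim}(G)=\dim\,\mathrm{span}\{\chi(S):S\in\mathcal{M}(G)\}$. *)

From HB Require Import structures.
From mathcomp Require Import all_boot all_order all_algebra.
From mathcomp Require Import reals.
Set Implicit Arguments. Unset Strict Implicit. Unset Printing Implicit Defensive.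
Import Order.TTheory GRing.Theory Num.Theory.
Local Open Scope ring_scope.

Definition edge (n : nat) := {e : {set 'I_n} | #|e| == 2%N}.

Definition weighting (R : realType) (n : nat) := {ffun edge n -> R}.

Definition positive_weighting (R : realType) n (w : weighting R n) :=
  forall e, 0 < w e.

Definition crosses n (X : {set 'I_n}) (e : edge n) : bool :=
  #|val e :&: X| == 1%N.

Definition proper_subset n (X : {set 'I_n}) : bool :=
  (X != set0) && (X != setT).

Definition cut_weight (R : realType) n (w : weighting R n) (X : {set 'I_n}) : R :=
  \sum_(e : edge n | crosses X e) w e.

Definition is_min_cut (R : realType) n (w : weighting R n) (X : {set 'I_n}) : bool :=
  proper_subset X &&
  [forall Y : {set 'I_n}, proper_subset Y ==> (cut_weight w X <= cut_weight w Y)].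

Definition min_cut_value (R : realType) n (w : weighting R n) (lam : R) : Prop :=
  (forall Y : {set 'I_n}, proper_subset Y -> lam <= cut_weight w Y) /\
  (exists2 X : {set 'I_n}, proper_subset X & cut_weight w X = lam).

Definition chi (R : realType) n (X : {set 'I_n}) : 'rV[R]_#|{: edge n}| :=
  \row_(k < #|{: edge n}|) (if crosses X (enum_val k) then 1 else 0).

(* matrix whose rows are chi(Delta(X)) for each X with Delta(X) a minimum cut,
   and 0 for the other X; its rank is dim span {chi(S) : S in M(G)}. *)
Definition mincut_matrix (R : realType) n (w : weighting R n)
  : 'M[R]_(#|{: {set 'I_n}}|, #|{: edge n}|) :=
  \matrix_(i < #|{: {set 'I_n}}|)
     (if is_min_cut w (enum_val i) then chi R (enum_val i) else 0).

Definition cdim (R : realType) n (w : weighting R n) : nat :=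
  \rank (mincut_matrix w).

(* To every ordered pair c = (i, j) of vertices attach a
   Hamiltonian cycle ("tour") of K_N: for i < j it visits
   j, i, i - 1, ..., 0, i + 1, ..., j - 1, j + 1, ..., N - 1, otherwise it is
   0, 1, ..., N - 1.  The weighting is the average of these N^2 tours, every
   edge of a tour carrying 1 / (2 N^2).

   A tour crosses every cut Delta(X) at least twice, and only twice
   when X is an arc of the tour.  Hence every cut weighs at least 1, and the
   minimum cuts, of weight 1, are the sets that are arcs of every tour: the
   stars and the initial segments {0, ..., m - 1} are such; conversely the
   identity tour and the tours of the pairs (0, a) show that, up to
   complement, these are the only ones.

   The stars of 0, ..., N - 2 and the segments below 2, ..., N - 1
   (2N - 3 vectors) span every minimum cut, and they are independent: the
   triangles 0 < j < N - 1 and the edges {m - 1, m}, {0, 1} successively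
   kill every coefficient of a vanishing combination. *)

From HB Require Import structures.
From mathcomp Require Import all_boot all_order all_algebra.
From mathcomp Require Import fingroup perm.
From mathcomp Require Import reals zify ring lra.
Set Implicit Arguments. Unset Strict Implicit. Unset Printing Implicit Defensive.
Import Order.TTheory GRing.Theory Num.Theory.

Definition flips (y : nat -> bool) (a b : nat) : nat :=
  \sum_(a <= t < b) (y t != y t.+1).

Lemma flips_ge_change (y : nat -> bool) a b :
  a <= b -> (y a != y b) <= flips y a b.
Proof.
move=> /subnKC <-; elim: (b - a) => [|d IH]; first by rewrite addn0 eqxx.
rewrite /flips addnS big_nat_recr ?leq_addr //= -/(flips y a (a + d)).
by move: IH; case: (y a); case: (y (a + d)); case: (y (a + d).+1) => /=; lia.
Qed.

Lemma flips_cat (y : nat -> bool) a b c :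
  a <= b -> b <= c -> flips y a c = flips y a b + flips y b c.
Proof. by move=> ab bc; rewrite /flips (big_cat_nat ab bc). Qed.

Lemma flips_cycle_four (y : nat -> bool) N p q r s :
  p <= q -> q <= r -> r <= s -> s <= N -> y N = y 0 ->
  (y p != y q) + (y q != y r) + (y r != y s) + (y s != y p) <= flips y 0 N.
Proof.
move=> pq qr rs sN yN.
have qN : q <= N by lia.
rewrite (flips_cat _ (leq0n p) (leq_trans pq qN)) (flips_cat _ pq qN).
rewrite (flips_cat _ qr (leq_trans rs sN)) (flips_cat _ rs sN).
have := flips_ge_change y (leq0n p); have := flips_ge_change y pq.
have := flips_ge_change y qr; have := flips_ge_change y rs.
have := flips_ge_change y sN; rewrite yN.
by case: (y 0); case: (y p); case: (y q); case: (y r); case: (y s) => /=; lia.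
Qed.

Lemma flips_cycle_ge2 (y : nat -> bool) N p q :
  p <= q -> q <= N -> y N = y 0 -> y p != y q -> 2 <= flips y 0 N.
Proof.
move=> pq qN yN ypq; have := flips_cycle_four pq (leqnn q) (leqnn q) qN yN.
by move: ypq; rewrite eqxx; case: (y p); case: (y q).
Qed.

Lemma flips_cycle_ge4 (y : nat -> bool) N p q r s :
  p <= q -> q <= r -> r <= s -> s <= N -> y N = y 0 ->
  y p != y q -> y q != y r -> y r != y s -> 4 <= flips y 0 N.
Proof.
move=> pq qr rs sN yN; have := flips_cycle_four pq qr rs sN yN.
by case: (y p); case: (y q); case: (y r); case: (y s).
Qed.

Lemma flips_cycle_interval (y : nat -> bool) N p q : p < q -> q <= N ->
  (forall t, t < N -> y t = (p <= t < q)) -> y N = y 0 -> flips y 0 N <= 2.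
Proof.
move=> pq qN yE yN; case: N qN yE yN => [|M] qN yE yN; first lia.
rewrite /flips big_nat_recr //= yN (yE M) // (yE 0) //.
have count_hit a : \sum_(0 <= t < M) (t.+1 == a) = (0 < a <= M).
  elim: M {qN yE yN} => [|M IH]; first by rewrite big_geq //; lia.
  by rewrite big_nat_recr //= IH; lia.
have : \sum_(0 <= t < M) (y t != y t.+1) <=
       \sum_(0 <= t < M) ((t.+1 == p) + (t.+1 == q)).
  rewrite big_nat_cond [X in _ <= X]big_nat_cond.
  by apply: leq_sum => t /andP[/andP[_ tM] _]; rewrite (yE t) ?(yE t.+1); lia.
by rewrite big_split /= !count_hit; lia.
Qed.

Lemma pair_edge_card n (a b : 'I_n) : a != b -> #|[set a; b]| == 2.
Proof. by move=> ab; rewrite cards2 ab. Qed.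

Definition pair_edge n (a b : 'I_n) (ab : a != b) : edge n :=
  exist (fun e : {set 'I_n} => #|e| == 2) [set a; b] (pair_edge_card ab).

Lemma crosses_pair_edge n (X : {set 'I_n}) (a b : 'I_n) (ab : a != b) :
  crosses X (pair_edge ab) = ((a \in X) != (b \in X)).
Proof.
rewrite /crosses /= setIUl cardsU -setIIl.
rewrite (_ : [set a] :&: [set b] = set0) ?set0I ?cards0 ?subn0; last first.
  by apply/setP => x; rewrite !inE; case: eqVneq => // ->; rewrite (negbTE ab).
have card1I (c : 'I_n) : #|[set c] :&: X| = (c \in X) :> nat.
  have [cX|cX] := boolP (c \in X); first by rewrite (setIidPl _) ?cards1 ?sub1set.
  apply/eqP; rewrite cards_eq0; apply/eqP/setP => x; rewrite !inE.
  by case: eqVneq => // ->; rewrite (negbTE cX).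
by rewrite !card1I; case: (a \in X); case: (b \in X).
Qed.

Section Tours.

Variable k : nat.
Local Notation N := k.+2.

(* tour s t is the t-th vertex (t read modulo N) of the Hamiltonian cycle of
   K_N visiting the vertices in the order s 0, s 1, ..., s (N - 1). *)
Definition tour (s : {perm 'I_N}) (t : nat) : 'I_N := s (inord (t %% N)).

Lemma tourE s t : t < N -> tour s t = s (inord t).
Proof. by move=> tN; rewrite /tour modn_small. Qed.

Lemma tour_period s : tour s N = tour s 0.
Proof. by rewrite /tour modnn mod0n. Qed.

Lemma tour_step_neq s t : tour s t != tour s t.+1.
Proof.
rewrite /tour (inj_eq perm_inj) -(inj_eq val_inj) /= !inordK ?ltn_pmod // modnS.
case: ifP => [dvdN1|_]; last by apply/eqP; lia.
apply/negP => /eqP tN0; have dvdNt : N %| t by rewrite /dvdn tN0.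
by move: dvdN1; rewrite -[t.+1]addn1 dvdn_addr // dvdn1.
Qed.

Lemma tour_onto s v : exists2 t, t < N & tour s t = v.
Proof.
by exists ((s^-1)%g v) => //; rewrite tourE // (_ : inord _ = (s^-1)%g v) ?permKV ?inord_val.
Qed.

Lemma tour_inj s t t' : t < N -> t' < N -> tour s t = tour s t' -> t = t'.
Proof.
move=> tN t'N; rewrite !tourE // => /perm_inj /(congr1 (@nat_of_ord _)).
by rewrite !inordK.
Qed.

Definition tour_edge s t : edge N := pair_edge (tour_step_neq s t).

Definition crossings (X : {set 'I_N}) s : nat := flips (fun t => tour s t \in X) 0 N.

Lemma crossingsE (X : {set 'I_N}) s :
  crossings X s = \sum_(t < N) crosses X (tour_edge s t).
Proof.
by rewrite /crossings /flips big_mkord; apply: eq_bigr => t _; rewrite crosses_pair_edge.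
Qed.

Lemma crossings_proper (X : {set 'I_N}) s : proper_subset X -> 2 <= crossings X s.
Proof.
case/andP => /set0Pn [u uX] XT.
have [v _ vX] : exists2 v, v \in [set: 'I_N] & v \notin X by apply/subsetPn; rewrite subTset.
have [t tN eu] := tour_onto s u; have [t' t'N ev] := tour_onto s v.
have yN : tour s N \in X = (tour s 0 \in X) by rewrite tour_period.
have [tt'|t't] := leqP t t'.
  by apply: (flips_cycle_ge2 tt' (ltnW t'N) yN); rewrite eu ev uX (negbTE vX).
by apply: (flips_cycle_ge2 (ltnW t't) (ltnW tN) yN); rewrite eu ev uX (negbTE vX).
Qed.

Lemma crossings_arc (X : {set 'I_N}) s p q : p < q -> q <= N ->
  (forall t, t < N -> (tour s t \in X) = (p <= t < q)) -> crossings X s <= 2.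
Proof.
move=> pq qN arcX; apply: (flips_cycle_interval pq qN arcX).
by rewrite tour_period.
Qed.

Lemma crossings_set1 v s : crossings [set v] s <= 2.
Proof.
have [t0 t0N <-] := tour_onto s v; apply: (crossings_arc (ltnSn t0) t0N) => t tN.
rewrite inE; apply/eqP/idP => [/tour_inj -> //|]; first lia.
by move=> tt0; congr tour; lia.
Qed.

Lemma crossingsC (X : {set 'I_N}) s : crossings (~: X) s = crossings X s.
Proof.
by apply: eq_bigr => t _; rewrite !inE; case: (tour s t \in X); case: (tour s t.+1 \in X).
Qed.

End Tours.

Lemma proper_set1 k (v : 'I_k.+2) : proper_subset [set v].
Proof.
apply/andP; split; first by apply/set0Pn; exists v; rewrite inE.
by apply/eqP => v_all; have := cardsT 'I_k.+2; rewrite -v_all cards1 card_ord.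
Qed.

Lemma proper_setC n (X : {set 'I_n}) : proper_subset X -> proper_subset (~: X).
Proof.
case/andP => X0 XT; apply/andP; split.
  by apply: contra_neq XT => /(congr1 (@setC _)); rewrite setCK setC0.
by apply: contra_neq X0 => /(congr1 (@setC _)); rewrite setCK setCT.
Qed.

Section TourAverage.

Local Open Scope ring_scope.

Variables (R : realType) (k : nat) (I : finType) (F : I -> {perm 'I_k.+2}).
Hypothesis I_gt0 : (0 < #|I|)%N.
Local Notation N := k.+2.

Definition tour_weighting : weighting R N :=
  [ffun e => (\sum_c \sum_(t < N) (e == tour_edge (F c) t))%:R / (2 * #|I|)%:R].

Lemma tour_cut_weight X :
  cut_weight tour_weighting X = (\sum_c crossings X (F c))%:R / (2 * #|I|)%:R.
Proof.
rewrite /cut_weight (eq_bigr _ (fun e _ => ffunE _ e)) -mulr_suml -natr_sum.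
congr (_%:R / _); rewrite exchange_big /=; apply: eq_bigr => c _.
rewrite crossingsE exchange_big /=; apply: eq_bigr => t _.
rewrite big_mkcond (bigD1 (tour_edge (F c) t)) //= eqxx big1 ?addn0 //.
by move=> e /negbTE ->; case: ifP.
Qed.

Let sum_two : (\sum_(c : I) 2 = 2 * #|I|)%N.
Proof. by rewrite sum_nat_const mulnC. Qed.

Lemma tour_cut_ge1 X : proper_subset X -> 1 <= cut_weight tour_weighting X.
Proof.
move=> pX; rewrite tour_cut_weight ler_pdivlMr ?ltr0n ?muln_gt0 // mul1r ler_nat.
by rewrite -sum_two; apply: leq_sum => c _; apply: crossings_proper.
Qed.

Lemma tour_cut_le1 X :
  (forall c, crossings X (F c) <= 2)%N -> cut_weight tour_weighting X <= 1.
Proof.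
move=> cX; rewrite tour_cut_weight ler_pdivrMr ?ltr0n ?muln_gt0 // mul1r ler_nat.
by rewrite -sum_two; apply: leq_sum => c _; apply: cX.
Qed.

Lemma tour_cut_set1 v : cut_weight tour_weighting [set v] = 1.
Proof.
apply/eqP; rewrite eq_le tour_cut_ge1 ?tour_cut_le1 ?proper_set1 //.
by move=> c; apply: crossings_set1.
Qed.

Lemma tour_cut_le1_crossings X : proper_subset X ->
  cut_weight tour_weighting X <= 1 -> forall c, crossings X (F c) = 2%N.
Proof.
move=> pX; rewrite tour_cut_weight ler_pdivrMr ?ltr0n ?muln_gt0 // mul1r ler_nat.
rewrite -sum_two => sum_le c.
have /leqif_sum sum_ge c' :
    true -> (2 <= crossings X (F c') ?= iff (2 == crossings X (F c')))%N.
  by move=> _; apply/leqif_eq/crossings_proper.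
move: sum_ge.2; rewrite eqn_leq sum_ge.1 sum_le => /esym/forallP/(_ c)/eqP.
by move=> <-.
Qed.

(* Stars have weight 1 and every cut weighs at least 1, so the minimum cuts
   are exactly the proper sets cut twice by every tour of the family. *)
Lemma tour_min_cutE X : is_min_cut tour_weighting X =
  proper_subset X && [forall c, crossings X (F c) == 2%N].
Proof.
apply/andP/andP => -[pX minX]; split => //.
  apply/forallP => c; apply/eqP/tour_cut_le1_crossings => //.
  by rewrite -(tour_cut_set1 ord0); apply: (implyP (forallP minX _)); apply: proper_set1.
apply/forallP => Y; apply/implyP => pY; apply: le_trans (tour_cut_ge1 pY).
by apply: tour_cut_le1 => c; rewrite (eqP (forallP minX c)).
Qed.

Lemma tour_weighting_pos :
  (forall e, exists c (t : 'I_N), e = tour_edge (F c) t) -> positive_weighting tour_weighting.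
Proof.
move=> covered e; rewrite ffunE divr_gt0 ?ltr0n ?muln_gt0 //.
have [c [t ->]] := covered e; rewrite (bigD1 c) // (bigD1 t) //= eqxx.
by rewrite -addnA ltn_addr.
Qed.

End TourAverage.

(* For i < j < N, zigzag i j lists 0, ..., N - 1 in the order
   j, i, i - 1, ..., 0, i + 1, ..., j - 1, j + 1, ..., N - 1. *)
Definition zigzag (i j t : nat) : nat :=
  if t == 0 then j else if t <= i.+1 then i.+1 - t else if t <= j then t.-1 else t.

Lemma zigzag_lt N i j t : i < j -> j < N -> t < N -> zigzag i j t < N.
Proof. by rewrite /zigzag => *; repeat case: ifP => ?; lia. Qed.

Lemma zigzag_inj i j t s : i < j -> zigzag i j t = zigzag i j s -> t = s.
Proof. by rewrite /zigzag => ?; repeat case: ifP => ?; lia. Qed.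

(* The initial segment {0, ..., m - 1} occupies consecutive positions of the
   zigzag. *)
Lemma zigzag_below i j t m : i < j -> 0 < m ->
  (zigzag i j t < m) = if m <= i.+1 then i.+2 - m <= t < i.+2
                       else if m <= j then 1 <= t < m.+1 else t < m.
Proof. by rewrite /zigzag => *; repeat case: ifP => ?; try (apply/idP/idP); lia. Qed.

Section PairTours.

Variable k : nat.
Local Notation N := k.+2.

Definition pair_order (c : 'I_N * 'I_N) (t : nat) : nat :=
  if c.1 < c.2 then zigzag c.1 c.2 t else t.

Lemma pair_order_lt c t : t < N -> pair_order c t < N.
Proof. by rewrite /pair_order; case: ifP => // *; apply: zigzag_lt. Qed.

Lemma pair_order_inj c : injective (pair_order c).
Proof. by move=> t s; rewrite /pair_order; case: ifP => // ij; apply: zigzag_inj. Qed.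

Definition pair_fun c (t : 'I_N) : 'I_N := inord (pair_order c t).

Lemma pair_fun_inj c : injective (pair_fun c).
Proof.
move=> t s /(congr1 (@nat_of_ord _)); rewrite !inordK ?pair_order_lt //.
by move/pair_order_inj/val_inj.
Qed.

Definition pair_tour c : {perm 'I_N} := perm (@pair_fun_inj c).

Lemma pair_tourE c t : t < N -> tour (pair_tour c) t = pair_order c t :> nat.
Proof. by move=> tN; rewrite tourE // permE /pair_fun inordK ?inordK ?pair_order_lt. Qed.

Definition below (m : nat) : {set 'I_N} := [set u : 'I_N | u < m].

Lemma crossings_below c m : 0 < m -> crossings (below m) (pair_tour c) <= 2.
Proof.
move=> m0; have mem_below t : t < N ->
    (tour (pair_tour c) t \in below m) = (pair_order c t < m).
  by move=> tN; rewrite inE pair_tourE.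
case: (leqP N m) => [Nm|mN].
  apply: (crossings_arc (p := 0) (q := N)) => // t tN.
  by rewrite inE tN /=; apply: leq_trans (ltn_ord _) Nm.
rewrite /pair_order in mem_below; case: (ltnP c.1 c.2) => ij in mem_below *;
  last by apply: (crossings_arc m0 (ltnW mN)) => t tN; rewrite mem_below.
have jN := ltn_ord c.2.
case: (leqP m c.1.+1) => [m_le_i|i_lt_m].
  apply: (crossings_arc (p := c.1.+2 - m) (q := c.1.+2)); try lia.
  by move=> t tN; rewrite mem_below // zigzag_below // m_le_i.
case: (leqP m c.2) => [m_le_j|j_lt_m].
  apply: (crossings_arc (p := 1) (q := m.+1)); try lia.
  by move=> t tN; rewrite mem_below // zigzag_below // (leqNgt m c.1.+1) i_lt_m m_le_j.
apply: (crossings_arc (p := 0) (q := m)); try lia.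
move=> t tN; rewrite mem_below // zigzag_below //.
by rewrite (leqNgt m c.1.+1) i_lt_m (leqNgt m c.2) j_lt_m.
Qed.

(* The edge {i, j}, i < j, is the first edge of the tour of (i, j). *)
Lemma pair_tours_cover (e : edge N) : exists c (t : 'I_N), e = tour_edge (pair_tour c) t.
Proof.
case: e => s s2; have [x [y [xy sE]]] := cards2P _ s2.
wlog lt_xy : x y xy sE / x < y.
  move=> W; case: (ltngtP x y) => [|yx|/val_inj eq_xy]; first exact: W.
    by apply: (W y x); rewrite 1?eq_sym // sE setUC.
  by rewrite eq_xy eqxx in xy.
exists (x, y), ord0; apply/val_inj => /=.
have tour0 : tour (pair_tour (x, y)) 0 = y.
  by apply/ord_inj; rewrite pair_tourE // /pair_order /= lt_xy.
have tour1 : tour (pair_tour (x, y)) 1 = x.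
  by apply/ord_inj; rewrite pair_tourE // /pair_order /= lt_xy /zigzag /=; lia.
by rewrite tour0 tour1 sE setUC.
Qed.

End PairTours.

Section TwiceCut.

Variable k : nat.
Local Notation N := k.+2.

(* A vertex set X that avoids 0 and is crossed at most twice by every pair
   tour ... *)
Variable X : {set 'I_N}.
Hypothesis cut_twice : forall c, crossings X (pair_tour c) <= 2.
Hypothesis X0 : ord0 \notin X.

Let crossings_ge4 c p q r s : p <= q -> q <= r -> r <= s -> s <= N ->
  let y t := tour (pair_tour c) t \in X in
  y p != y q -> y q != y r -> y r != y s -> False.
Proof.
move=> pq qr rs sN y ypq yqr yrs.
have yN : y N = y 0 by rewrite /y tour_period.
have := flips_cycle_ge4 pq qr rs sN yN ypq yqr yrs; have := cut_twice c.
by rewrite /crossings -/y; lia.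
Qed.

Let tour_at c t (v : 'I_N) :
  t < N -> pair_order c t = v -> tour (pair_tour c) t = v.
Proof. by move=> tN tv; apply/ord_inj; rewrite pair_tourE. Qed.

(* ... is an interval of 0 < 1 < ... < N - 1, by the identity tour ... *)
Lemma cut_twice_convex (u v w : 'I_N) :
  u < v -> v < w -> u \in X -> w \in X -> v \in X.
Proof.
move=> uv vw uX wX; apply/negPn/negP => vX.
have idE (x : 'I_N) : tour (pair_tour (ord0, ord0)) x = x.
  by apply: tour_at; rewrite // /pair_order ltnn.
have id0 : tour (pair_tour (ord0, ord0)) 0 = ord0 :> 'I_N by apply: (idE ord0).
apply: (@crossings_ge4 (ord0, ord0) 0 u v w (leq0n u) (ltnW uv) (ltnW vw)
  (ltnW (ltn_ord w))) => /=;
  by rewrite ?id0 ?idE ?(negbTE X0) ?uX ?(negbTE vX) ?wX.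
Qed.

(* ... that cannot contain two consecutive vertices a, a + 1 > 0 without
   containing N - 1, since the tour of (0, a) visits a, 0, a + 1, N - 1 in
   this order ... *)
Lemma cut_twice_succ (a b : 'I_N) :
  0 < a -> b = a.+1 :> nat -> ord_max \notin X -> a \in X -> b \notin X.
Proof.
move=> a0 ba maxX aX; apply/negP => bX.
have posE t (v : 'I_N) : t < N -> zigzag 0 a t = v -> tour (pair_tour (ord0, a)) t = v.
  by move=> tN tv; apply: tour_at; rewrite // /pair_order /= a0.
have bN := ltn_ord b; have bmax : b != ord_max by apply: contraNneq maxX => <-.
have b_lt : a.+1 < k.+1 by move: bmax; rewrite -val_eqE /=; lia.
have p0 : tour (pair_tour (ord0, a)) 0 = a by apply: posE.
have p1 : tour (pair_tour (ord0, a)) 1 = ord0 by apply: posE.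
have p2 : tour (pair_tour (ord0, a)) a.+1 = b.
  by apply: posE; rewrite // /zigzag; repeat case: ifP => ?; lia.
have p3 : tour (pair_tour (ord0, a)) k.+1 = ord_max.
  by apply: posE; rewrite // /zigzag /=; repeat case: ifP => ?; lia.
apply: (@crossings_ge4 (ord0, a) 0 1 a.+1 k.+1 (leq0n 1) (ltn0Sn a) (ltnW b_lt)
  (leqnSn _)) => /=;
  by rewrite ?p0 ?p1 ?p2 ?p3 ?aX ?(negbTE X0) ?bX ?(negbTE maxX).
Qed.

Lemma cut_twice_shape : X != set0 ->
  (exists2 a : 'I_N, a < k.+1 & X = [set a]) \/
  (exists2 a : 'I_N, 0 < a & X = ~: below k a).
Proof.
have lt_max (x : 'I_N) : (x < k.+1) = (x != ord_max).
  by rewrite -(inj_eq val_inj) /= ltn_neqAle -ltnS ltn_ord andbT.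
move=> /set0Pn [u0 u0X]; have [a aX amin] := arg_minnP (fun i : 'I_N => i : nat) u0X.
have a0 : 0 < a.
  by rewrite lt0n; apply: contraNneq X0 => a0; rewrite (_ : ord0 = a) //; exact/val_inj.
have [maxX|maxX] := boolP (ord_max \in X).
  right; exists a => //; apply/setP => u; rewrite !inE -leqNgt.
  apply/idP/idP => [/amin //|au]; have [->//|ua] := eqVneq u a.
  have [->//|umax] := eqVneq u ord_max.
  apply: (cut_twice_convex (u := a) (w := ord_max)); rewrite // ?lt_max //.
  by rewrite ltn_neqAle au eq_sym ua.
have a_max : a < k.+1 by rewrite lt_max; apply: contraNneq maxX => <-.
left; exists a => //; apply/setP => u; rewrite !inE; apply/idP/eqP => [uX|->//].
apply/ord_inj/eqP; rewrite eqn_leq amin // andbT leqNgt; apply/negP => au.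
have a1N : a.+1 < N by lia.
have := cut_twice_succ (b := Ordinal a1N) a0 erefl maxX aX; apply/negP/negPn.
have [->//|ua1] := eqVneq (Ordinal a1N) u.
apply: (cut_twice_convex (u := a) (w := u)) => //=.
by move: ua1; rewrite -val_eqE /=; lia.
Qed.

End TwiceCut.

Lemma crossesC n (X : {set 'I_n}) e : crosses (~: X) e = crosses X e.
Proof.
rewrite /crosses; have := cardsID X (val e); rewrite setDE (setIC _ (~: X)).
by case: e => e /= /eqP -> sum2; apply/eqP/eqP; lia.
Qed.

Lemma chiC (R : realType) n (X : {set 'I_n}) : chi R (~: X) = chi R X.
Proof. by apply/rowP => i; rewrite !mxE crossesC. Qed.

Section PairWeighting.

Variables (R : realType) (k : nat).
Local Notation N := k.+2.

Definition pair_weighting : weighting R N := tour_weighting R (@pair_tour k).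

Let pairs_gt0 : 0 < #|{: 'I_N * 'I_N}|.
Proof. by rewrite card_prod card_ord. Qed.

Lemma pair_weighting_pos : positive_weighting pair_weighting.
Proof. exact/tour_weighting_pos/pair_tours_cover. Qed.

Lemma pair_cut_ge1 X : proper_subset X -> (1 <= cut_weight pair_weighting X)%R.
Proof. exact: tour_cut_ge1. Qed.

Lemma pair_cut_set1 v : cut_weight pair_weighting [set v] = 1%R.
Proof. exact: tour_cut_set1. Qed.

Lemma pair_min_cutE X : is_min_cut pair_weighting X =
  proper_subset X && [forall c, crossings X (pair_tour c) == 2].
Proof. exact: tour_min_cutE. Qed.

(* Stars and proper initial segments are arcs of every pair tour, hence
   minimum cuts. *)
Lemma pair_min_cut_set1 v : is_min_cut pair_weighting [set v].
Proof.
rewrite pair_min_cutE proper_set1; apply/forallP => c.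
by rewrite eqn_leq crossings_set1 crossings_proper ?proper_set1.
Qed.

Lemma pair_min_cut_below m : 0 < m < N -> is_min_cut pair_weighting (below k m).
Proof.
case/andP=> m0 mN; have pm : proper_subset (below k m).
  apply/andP; split; first by apply/set0Pn; exists ord0; rewrite inE.
  by apply/eqP => /setP /(_ (Ordinal mN)); rewrite !inE ltnn.
rewrite pair_min_cutE pm; apply/forallP => c.
by rewrite eqn_leq crossings_below // crossings_proper.
Qed.

Lemma pair_min_cut_chi X : is_min_cut pair_weighting X ->
  (exists2 v : 'I_N, v < k.+1 & chi R X = chi R [set v]) \/
  (exists2 m, 2 <= m <= k.+1 & chi R X = chi R (below k m)).
Proof.
rewrite pair_min_cutE => /andP [pX /forallP cut2].
wlog X0 : X pX cut2 / ord0 \notin X.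
  move=> W; have [X0|] := boolP (ord0 \in X); last exact: W.
  rewrite -chiC; apply: W; rewrite ?inE ?X0 ?proper_setC //.
  by move=> c; rewrite crossingsC.
have X_ne0 : X != set0 by case/andP: pX.
case: (cut_twice_shape (fun c => eq_leq (eqP (cut2 c))) X0 X_ne0) => [[v vN ->]|[a a0 ->]].
  by left; exists v.
rewrite chiC; have [a1|a1] := eqVneq (a : nat) 1.
  left; exists ord0 => //; congr chi; apply/setP => u; rewrite !inE a1.
  by rewrite -(inj_eq val_inj) /=; lia.
by right; exists a => //; have := ltn_ord a; lia.
Qed.

End PairWeighting.

Local Open Scope ring_scope.

Section Independence.

Variables (R : realType) (k : nat).
Local Notation N := k.+2.
Local Notation E := #|{: edge N}|.

Definition wid (r : 'I_k.+1) : 'I_N := widen_ord (leqnSn _) r.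

Definition star_mx : 'M[R]_(k.+1, E) := \matrix_(r < k.+1) chi R [set wid r].
Definition below_mx : 'M[R]_(k, E) := \matrix_(m < k) chi R (below k m.+2).
Definition basis_mx : 'M[R]_(k.+1 + k, E) := col_mx star_mx below_mx.

Definition comb (alpha : 'rV[R]_k.+1) (beta : 'rV[R]_k) (e : edge N) : R :=
  \sum_r alpha 0 r * (crosses [set wid r] e)%:R +
  \sum_m beta 0 m * (crosses (below k m.+2) e)%:R.

Lemma combE alpha beta e :
  (alpha *m star_mx + beta *m below_mx) 0 (enum_rank e) = comb alpha beta e.
Proof.
rewrite mxE !mxE; congr (_ + _); apply: eq_bigr => r _;
  by rewrite !mxE enum_rankK; case: crosses.
Qed.

Lemma below_triangle m (i j l : 'I_N) (ij : i != j) (il : i != l) (jl : j != l) :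
  (i < j < l)%N ->
  (crosses (below k m) (pair_edge il))%:R - (crosses (below k m) (pair_edge ij))%:R
    - (crosses (below k m) (pair_edge jl))%:R = 0 :> R.
Proof.
case/andP => lt_ij lt_jl; rewrite !crosses_pair_edge !inE.
by case: (ltnP i m) => im; case: (ltnP j m) => jm; case: (ltnP l m) => lm;
  try (exfalso; lia); rewrite /=; ring.
Qed.

Lemma star_triangle u (i j l : 'I_N) (ij : i != j) (il : i != l) (jl : j != l) :
  (crosses [set u] (pair_edge il))%:R - (crosses [set u] (pair_edge ij))%:R
    - (crosses [set u] (pair_edge jl))%:R = -2 * (u == j)%:R :> R.
Proof.
rewrite !crosses_pair_edge !inE [u == j]eq_sym.
case: (eqVneq i u) => [iu|_]; case: (eqVneq j u) => [ju|_]; case: (eqVneq l u) => [lu|_];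
  rewrite /=; try ring; by move: ij il jl; rewrite ?iu ?ju ?lu eqxx.
Qed.

Lemma comb_triangle alpha beta (i j l : 'I_N) (ij : i != j) (il : i != l) (jl : j != l) :
  (i < j < l)%N ->
  comb alpha beta (pair_edge il) - comb alpha beta (pair_edge ij)
    - comb alpha beta (pair_edge jl) =
  -2 * \sum_r alpha 0 r * (wid r == j)%:R.
Proof.
move=> ijl; rewrite /comb.
have stars : \sum_r alpha 0 r * (crosses [set wid r] (pair_edge il))%:R
    - \sum_r alpha 0 r * (crosses [set wid r] (pair_edge ij))%:R
    - \sum_r alpha 0 r * (crosses [set wid r] (pair_edge jl))%:R
    = -2 * \sum_r alpha 0 r * (wid r == j)%:R.
  rewrite -!sumrB mulr_sumr; apply: eq_bigr => r _.
  by rewrite -!mulrBr star_triangle mulrCA.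
have segments : \sum_m beta 0 m * (crosses (below k m.+2) (pair_edge il))%:R
    - \sum_m beta 0 m * (crosses (below k m.+2) (pair_edge ij))%:R
    - \sum_m beta 0 m * (crosses (below k m.+2) (pair_edge jl))%:R = 0.
  rewrite -!sumrB big1 // => m _.
  by rewrite -!mulrBr below_triangle // mulr0.
lra.
Qed.

Section ZeroCombination.

Variables (alpha : 'rV[R]_k.+1) (beta : 'rV[R]_k).
Hypothesis comb0 : forall e, comb alpha beta e = 0.

(* The triangle 0 < wid r < N - 1 isolates the coefficient of the star of wid r. *)
Lemma inner_star_coef0 (r : 'I_k.+1) : (0 < r)%N -> alpha 0 r = 0.
Proof.
move=> r0; have ij : ord0 != wid r by rewrite -(inj_eq val_inj) /= eq_sym -lt0n.
have jl : wid r != ord_max by rewrite -(inj_eq val_inj) /= ltn_eqF.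
have il : ord0 != ord_max :> 'I_N by [].
have ijl : ((ord0 : 'I_N) < wid r < (ord_max : 'I_N))%N by rewrite /= r0 ltn_ord.
have := comb_triangle alpha beta ij il jl ijl; rewrite !comb0 !subr0.
rewrite (bigD1 r) //= big1 => [|s sr]; last first.
  by rewrite -(inj_eq val_inj) /= (inj_eq val_inj) (negbTE sr) mulr0.
rewrite eqxx mulr1 addr0 => /esym/eqP.
by rewrite mulf_eq0 oppr_eq0 pnatr_eq0 /= => /eqP.
Qed.

(* The edge {m + 1, m + 2} is cut by no other candidate than below (m + 2). *)
Lemma below_coef0 (m : 'I_k) : beta 0 m = 0.
Proof.
have m1 : (m.+1 < N)%N by have := ltn_ord m; lia.
have m2 : (m.+2 < N)%N by have := ltn_ord m; lia.
have e12 : Ordinal m1 != Ordinal m2 by rewrite -(inj_eq val_inj) /= eqSS ltn_eqF.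
have := comb0 (pair_edge e12); rewrite /comb big1 ?add0r => [|r _]; last first.
  have [r0|r0] := posnP r; last by rewrite inner_star_coef0 // mul0r.
  by rewrite crosses_pair_edge !inE -!(inj_eq val_inj) /= r0 mulr0.
rewrite (bigD1 m) //= big1 ?addr0 => [|m' m'm]; last first.
  move: m'm; rewrite -(inj_eq val_inj) crosses_pair_edge !inE /= => m'm.
  suff -> : (m.+1 < m'.+2)%N = (m.+2 < m'.+2)%N by rewrite eqxx mulr0.
  by apply/idP/idP; lia.
by rewrite crosses_pair_edge !inE /= ltnSn ltnn mulr1.
Qed.

(* Finally the edge {0, 1} is cut by the star of 0 alone. *)
Lemma first_star_coef0 : alpha 0 ord0 = 0.
Proof.
have e01 : ord0 != (Ordinal (isT : (1 < N)%N)) by [].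
have := comb0 (pair_edge e01); rewrite /comb (bigD1 ord0) //= big1 ?addr0 => [|r r0].
  by rewrite big1 ?addr0 => [|m _]; rewrite crosses_pair_edge !inE /= ?eqxx ?mulr1 ?mulr0.
by rewrite inner_star_coef0 ?mul0r // lt0n.
Qed.

Lemma comb0_coefs : alpha = 0 /\ beta = 0.
Proof.
split; apply/rowP => i; rewrite !mxE ?ord1; last exact: below_coef0.
have [i0|i0] := posnP i; last exact: inner_star_coef0.
by rewrite (_ : i = ord0) ?first_star_coef0 //; exact/val_inj.
Qed.

End ZeroCombination.

Lemma basis_mx_free : row_free basis_mx.
Proof.
apply/inj_row_free => v; rewrite -(hsubmxK v) mul_row_col => comb_v0.
have [-> ->] : lsubmx v = 0 /\ rsubmx v = 0.
  by apply: comb0_coefs => e; rewrite -combE comb_v0 mxE.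
by rewrite row_mx0.
Qed.

End Independence.

Lemma min_cut_row_sub (R : realType) n (w : weighting R n) X :
  is_min_cut w X -> (chi R X <= mincut_matrix w)%MS.
Proof.
move=> mcX; rewrite -(_ : row (enum_rank X) (mincut_matrix w) = chi R X) ?row_sub //.
by rewrite rowK enum_rankK mcX.
Qed.

(* The minimum cuts span the same space as the 2 N - 3 independent rows of
   basis_mx. *)
Lemma pair_cdim (R : realType) k : cdim (pair_weighting R k) = (k.+1 + k)%N.
Proof.
have sub_basis : (mincut_matrix (pair_weighting R k) <= basis_mx R k)%MS.
  apply/row_subP => i; rewrite rowK; case: ifP => [mc|_]; last exact: sub0mx.
  case: (pair_min_cut_chi mc) => [[v vk ->]|[m /andP[m2 mk] ->]].
    rewrite (_ : chi R [set v] = row (lshift k (Ordinal vk)) (basis_mx R k)) ?row_sub //.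
    by rewrite rowKu rowK; congr (chi R [set _]); exact/val_inj.
  have mk' : (m - 2 < k)%N by lia.
  rewrite (_ : chi R (below k m) = row (rshift k.+1 (Ordinal mk')) (basis_mx R k)) ?row_sub //.
  by rewrite rowKd rowK /=; congr (chi R (below k _)); lia.
have basis_sub : (basis_mx R k <= mincut_matrix (pair_weighting R k))%MS.
  rewrite col_mx_sub; apply/andP; split; apply/row_subP => r; rewrite rowK;
    apply: min_cut_row_sub; first exact: pair_min_cut_set1.
  by apply: pair_min_cut_below; have := ltn_ord r; lia.
by apply/eqP; rewrite /cdim -(eqP (basis_mx_free R k)) eqn_leq !mxrankS.
Qed.

Theorem theorem16 (R : realType) (n : nat) (hn : (2 <= n)%N) :
  exists w : weighting R n,
    [/\ positive_weighting w,
        cdim w = (2 * n - 3)%N,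
        min_cut_value w 1
      & forall v : 'I_n, is_min_cut w [set v]].
Proof.
case: n hn => [|[|k]] // _; exists (pair_weighting R k); split.
- exact: pair_weighting_pos.
- by rewrite pair_cdim; lia.
- split; first exact: pair_cut_ge1.
  by exists [set ord0]; [exact: proper_set1 | exact: pair_cut_set1].
- exact: pair_min_cut_set1.
Qed.
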